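(* Let $p$ be an odd prime and let $\nu$ and $l$ be positive integers. If $2^{\nu+1}\nmid(p^l+1)$, then \[t(2^{\nu+1},p^l):=\frac{\phi(2^{\nu+1})}{2\operatorname{ord}_{2^{\nu+1}}(p^{l})}=\gcd(2^{\nu-1},\alpha_p l).\] In particular, if $p=5$, then $t(2^{\nu+1},5^l)=\gcd(2^{\nu-1},l)$.
   Context: $\phi$ is Euler's totient function and $\operatorname{ord}_m(x)$ is the multiplicative order of $x$ modulo $m$. For an odd prime $p$ and $\nu\geq1$, $\alpha_p$ denotes the unique integer in $\{0,1,\dots,2^{\nu-1}-1\}$ such that $p\equiv 5^{\alpha_p}\pmod{2^{\nu+1}}$ if $p\equiv1\pmod 4$, and $p\equiv -5^{\alpha_p}\pmod{2^{\nu+1}}$ if $p\equiv 3\pmod 4$ (so $\alpha_p=0$ when $\nu=1$). *)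

From mathcomp Require Import all_boot all_algebra.
Set Implicit Arguments. Unset Strict Implicit. Unset Printing Implicit Defensive.
Import GRing.Theory Num.Theory.

(* Multiplicative order of x modulo m: the least k > 0 with x^k = 1 (mod m).
   Computed as the first k in 0..m satisfying this (for coprime x, m >= 1
   the order is <= totient m <= m, so the search range suffices).  *)
Definition ord_mod (m x : nat) : nat :=
  find (fun k => (0 < k) && (x ^ k == 1 %[mod m])) (iota 0 m.+1).

(* alpha_p (depending on nu): the unique a in {0,..,2^(nu-1)-1} with
   p = 5^a (mod 2^(nu+1)) if p = 1 (mod 4), and p = -5^a (mod 2^(nu+1))
   (i.e. p + 5^a = 0 (mod 2^(nu+1))) if p = 3 (mod 4). *)
Definition alpha_cond (nu p a : nat) : bool :=
  if p %% 4 == 1 then p == 5 ^ a %[mod 2 ^ nu.+1]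
  else p + 5 ^ a == 0 %[mod 2 ^ nu.+1].

Definition alpha (nu p : nat) : nat :=
  find (alpha_cond nu p) (iota 0 (2 ^ nu.-1)).

Definition t_val (m q : nat) : rat :=
  ((totient m)%:R / (2 * ord_mod m q)%N%:R)%R.

From mathcomp Require Import all_boot all_algebra zify.

(* Since v_2(5^n - 1) = v_2(n) + 2, the residue 5 has order 2^(nu-1) modulo
   2^(nu+1), and lifting shows its powers cover the residues that are 1 mod 4;
   hence p = +-5^alpha.  Then (p^l)^k = 1 exactly when 2^(nu-1) | alpha l k:
   for l k even the sign disappears, and for l k odd both sides fail, the left
   one because -5^j = 3 mod 4, the right one because 2^(nu-1) | alpha l would
   force p^l = -1.  So ord(p^l) = 2^(nu-1) / gcd(2^(nu-1), alpha l), and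
   phi(2^(nu+1)) = 2^nu turns t into that gcd. *)

Set Implicit Arguments.
Unset Strict Implicit.
Unset Printing Implicit Defensive.

Import GRing.Theory Num.Theory.

Lemma logn2_pow2_odd j w : odd w -> logn 2 (2 ^ j * w) = j.
Proof. by move=> w_odd; rewrite mulnC logn_Gauss ?coprime2n // pfactorK. Qed.

Lemma expn1D_linear d n : exists t, (1 + d) ^ n = 1 + n * d + d * d * t.
Proof.
elim: n => [|n [t IH]]; first by exists 0; rewrite muln0.
by exists (n + t + t * d); rewrite expnSr IH; nia.
Qed.

Lemma pow5_pow2 j : exists2 u, odd u & 5 ^ 2 ^ j = 1 + 2 ^ j.+2 * u.
Proof.
elim: j => [|j [u u_odd IH]]; first by exists 1.
exists (u + 2 ^ j.+1 * (u * u)); first by rewrite oddD oddM oddX /= u_odd.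
by rewrite expnS mulnC expnM IH !expnS; nia.
Qed.

Lemma logn2_pow5_sub1 n : 0 < n -> logn 2 (5 ^ n - 1) = (logn 2 n).+2.
Proof.
move=> n_gt0; have [q q_odd ->] : exists2 q, odd q & n = 2 ^ logn 2 n * q.
  have [q q_coprime n_eq] := pfactor_coprime (isT : prime 2) n_gt0.
  by exists q; rewrite -?coprime2n // mulnC.
rewrite logn2_pow2_odd // expnM; set j := logn 2 n.
have [u u_odd ->] := pow5_pow2 j; have [t ->] := expn1D_linear (2 ^ j.+2 * u) q.
have -> : 1 + q * (2 ^ j.+2 * u) + 2 ^ j.+2 * u * (2 ^ j.+2 * u) * t - 1
        = 2 ^ j.+2 * (u * (q + 2 ^ j.+2 * (u * t))) by nia.
by rewrite logn2_pow2_odd // oddM u_odd oddD q_odd oddM oddX.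
Qed.

Lemma pow5_eq1_mod_pow2 nu n :
  0 < nu -> (5 ^ n == 1 %[mod 2 ^ nu.+1]) = (2 ^ nu.-1 %| n).
Proof.
move=> nu_gt0; rewrite eqn_mod_dvd ?expn_gt0 //.
have [->|n_gt0] := posnP n; first by rewrite subnn !dvdn0.
rewrite !pfactor_dvdn // ?logn2_pow5_sub1 ?subn_gt0 ?(ltn_exp2l 0) //; lia.
Qed.

Lemma pow2_ndvd_pow5_add1 nu j : 0 < nu -> ~~ (2 ^ nu.+1 %| 5 ^ j + 1).
Proof.
move=> nu_gt0; have dvd4 : 4 %| 2 ^ nu.+1 by apply: (@dvdn_exp2l 2 2).
apply/negP => /(dvdn_trans dvd4).
by rewrite /dvdn -modnDml -modnXm exp1n.
Qed.

Lemma modn_double d z : z %% (2 * d) = z %% d + (z %/ d) %% 2 * d.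
Proof.
rewrite {1}(divn_eq (z %% (2 * d)) d) -modn_divl modn_dvdm ?dvdn_mull //.
by rewrite addnC.
Qed.

Lemma modn_double_cases d x y :
  x = y %[mod d] -> x = y %[mod 2 * d] \/ x = y + d %[mod 2 * d].
Proof.
have [->|d_gt0] := posnP d; first by rewrite muln0 !modn0 addn0; left.
rewrite !(modn_double d) modnDr divnDr ?dvdnn // divnn d_gt0 => ->.
have -> : (y %/ d + 1) %% 2 = 1 - y %/ d %% 2 by lia.
move: (x %/ d %% 2) (y %/ d %% 2) (ltn_pmod (x %/ d) (isT : 0 < 2))
  (ltn_pmod (y %/ d) (isT : 0 < 2)).
by move=> [|[|//]] [|[|//]] _ _; rewrite ?mul0n ?mul1n; [left|right|right|left].
Qed.

Lemma pow5_add_pow2 n a : 5 ^ (a + 2 ^ n) = 5 ^ a + 2 ^ n.+2 %[mod 2 ^ n.+3].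
Proof.
rewrite expnD; have [u u_odd ->] := pow5_pow2 n.
have := odd_double_half (5 ^ a * u); rewrite oddM oddX u_odd orbT /= -muln2.
set w := _./2 => Ew.
rewrite mulnDr muln1 mulnCA -Ew mulnDr muln1 addnA mulnCA -expnSr.
by rewrite addnC modnMDl.
Qed.

Lemma pow5_onto_mod_pow2 n x :
  x %% 4 = 1 -> exists2 a, a < 2 ^ n & x = 5 ^ a %[mod 2 ^ n.+2].
Proof.
move=> x_mod4; elim: n => [|n [a a_lt Ha]]; first by exists 0; rewrite ?x_mod4.
have [Hx|Hx] := modn_double_cases Ha; rewrite -expnS in Hx.
  by exists a; rewrite // expnS; lia.
exists (a + 2 ^ n); first by rewrite expnS; lia.
by rewrite Hx pow5_add_pow2.
Qed.

Lemma alpha_spec nu p : 0 < nu -> odd p -> alpha_cond nu p (alpha nu p).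
Proof.
move=> nu_gt0 p_odd.
suff has_a : has (alpha_cond nu p) (iota 0 (2 ^ nu.-1)).
  have := nth_find 0 has_a; rewrite nth_iota ?add0n //.
  by move: has_a; rewrite has_find size_iota.
suff [a a_lt Ha] : exists2 a, a < 2 ^ nu.-1 & alpha_cond nu p a.
  by apply/hasP; exists a; rewrite ?mem_iota.
have onto x : x %% 4 = 1 -> exists2 a, a < 2 ^ nu.-1 & x = 5 ^ a %[mod 2 ^ nu.+1].
  by move=> /(pow5_onto_mod_pow2 nu.-1); rewrite prednK.
rewrite /alpha_cond; case: eqP => [/onto [a a_lt Ha]|p_mod4].
  by exists a; last exact/eqP.
have M4 : 2 ^ nu.+1 = 4 * 2 ^ nu.-1.
  by rewrite -[in LHS](prednK nu_gt0) !expnS mulnA.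
have K_gt0 : 0 < 2 ^ nu.-1 by rewrite expn_gt0.
(* p (2^(nu+1) - 1) represents -p modulo 2^(nu+1), and it is 1 mod 4. *)
have /onto [a a_lt Ha] : p * (2 ^ nu.+1 - 1) %% 4 = 1.
  have p_mod2 : p %% 2 = 1 by rewrite modn2 p_odd.
  have p_mod4' : p %% 4 = 3 by lia.
  by rewrite -modnMm p_mod4' M4 (_ : (4 * _ - 1) %% 4 = 3) //; lia.
exists a => //; apply/eqP.
rewrite -modnDmr -Ha modnDmr -{1}[p]muln1 -mulnDr subnKC ?expn_gt0 //.
by rewrite modnMl mod0n.
Qed.

Lemma dvdn_addX M x y n : M %| x + y ->
  if odd n then M %| x ^ n + y ^ n else x ^ n == y ^ n %[mod M].
Proof.
move=> Mxy; elim: n => [|n IH] //=; rewrite !expnS.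
case: (odd n) IH => /= IH.
  rewrite -(eqn_modDr (x * y ^ n)) -mulnDr [y * _ + _]addnC -mulnDl.
  by rewrite (eqP (dvdn_mull x IH)) (eqP (dvdn_mulr _ Mxy)).
rewrite /dvdn -modnDml -modnMmr (eqP IH) modnMmr modnDml -mulnDl.
exact: dvdn_mulr.
Qed.

Lemma dvdn_mul_gcd K b k : 0 < K -> (K %| b * k) = (K %/ gcdn K b %| k).
Proof.
move=> K_gt0; have g_gt0 : 0 < gcdn K b by rewrite gcdn_gt0 K_gt0.
have -> : (K %| b * k) = (K %| gcdn (K * k) (b * k)).
  by rewrite dvdn_gcd (dvdn_mulr k (dvdnn K)).
by rewrite -muln_gcdl -[RHS](dvdn_pmul2r g_gt0) divnK ?dvdn_gcdl // mulnC.
Qed.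

Lemma ord_mod_unique m x d : 0 < d <= m ->
  (forall k, (x ^ k == 1 %[mod m]) = (d %| k)) -> ord_mod m x = d.
Proof.
move=> /andP[d_gt0 d_le] Hx.
rewrite /ord_mod -(subnKC (leqW d_le)) iotaD find_cat size_iota add0n.
have -> : has (fun k => (0 < k) && (x ^ k == 1 %[mod m])) (iota 0 d) = false.
  apply/hasP => -[k]; rewrite mem_iota Hx => /andP[_ k_lt] /andP[k_gt0].
  by move/(dvdn_leq k_gt0); rewrite leqNgt k_lt.
by rewrite subSn //; cbn [iota find]; rewrite d_gt0 Hx dvdnn addn0.
Qed.

Lemma t_val_pow2 nu x b : 0 < nu ->
  (forall k, (x ^ k == 1 %[mod 2 ^ nu.+1]) = (2 ^ nu.-1 %| b * k)) ->
  t_val (2 ^ nu.+1) x = ((gcdn (2 ^ nu.-1) b)%:R : rat)%R.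
Proof.
move=> nu_gt0 Hx; set K := 2 ^ nu.-1; set g := gcdn K b.
have K_gt0 : 0 < K by rewrite expn_gt0.
have gK : g %| K by apply: dvdn_gcdl.
have g_gt0 : 0 < g := dvdn_gt0 K_gt0 gK.
have Kg_gt0 : 0 < K %/ g by rewrite divn_gt0 // dvdn_leq.
have ord_x : ord_mod (2 ^ nu.+1) x = K %/ g.
  apply: ord_mod_unique => [|k]; last by rewrite Hx dvdn_mul_gcd.
  by rewrite Kg_gt0 (leq_trans (leq_div _ _)) // leq_pexp2l //; lia.
rewrite /t_val ord_x totient_pfactor // mul1n.
have -> : 2 ^ nu = g * (2 * (K %/ g)).
  by rewrite mulnCA (mulnC g) divnK // -expnS prednK.
by rewrite natrM mulfK // pnatr_eq0 -lt0n muln_gt0.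
Qed.

Lemma expn_eq1_mod_pow2 nu p l k :
  0 < nu -> odd p -> ~~ (2 ^ nu.+1 %| p ^ l + 1) ->
  ((p ^ l) ^ k == 1 %[mod 2 ^ nu.+1]) = (2 ^ nu.-1 %| alpha nu p * l * k).
Proof.
move=> nu_gt0 p_odd p_l; set a := alpha nu p; set M := 2 ^ nu.+1.
rewrite -expnM -mulnA -pow5_eq1_mod_pow2 // [5 ^ _]expnM.
have := alpha_spec nu_gt0 p_odd; rewrite /alpha_cond -/a -/M.
case: ifP => _ p_5a; first by rewrite -modnXm (eqP p_5a) modnXm.
rewrite mod0n in p_5a.
have := dvdn_addX (l * k) p_5a; case: ifP => [lk_odd p_lk | _ /eqP-> //].
have /andP[l_odd k_odd] : odd l && odd k by rewrite -oddM.
have -> : (p ^ (l * k) == 1 %[mod M]) = false.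
  apply: contraNF (pow2_ndvd_pow5_add1 (a * (l * k)) nu_gt0) => /eqP p_lk1.
  by rewrite addnC expnM /dvdn -modnDml -p_lk1 modnDml.
apply/esym/negbTE; apply: contra p_l => five_alk.
have : 2 ^ nu.-1 %| a * l.
  rewrite -(@Gauss_dvdl _ _ k) ?coprimeXl ?coprime2n // -mulnA.
  by rewrite -pow5_eq1_mod_pow2 // expnM.
rewrite -pow5_eq1_mod_pow2 // => /eqP five_al.
by move: (dvdn_addX l p_5a); rewrite l_odd /dvdn -modnDmr -expnM five_al modnDmr.
Qed.

Theorem corollary3p10 :
  (forall (p nu l : nat), prime p -> odd p -> 0 < nu -> 0 < l ->
     ~~ (2 ^ nu.+1 %| p ^ l + 1) ->
     t_val (2 ^ nu.+1) (p ^ l) = ((gcdn (2 ^ nu.-1) (alpha nu p * l))%:R : rat)%R)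
  /\
  (forall (nu l : nat), 0 < nu -> 0 < l ->
     t_val (2 ^ nu.+1) (5 ^ l) = ((gcdn (2 ^ nu.-1) l)%:R : rat)%R).
Proof.
split=> [p nu l _ p_odd nu_gt0 _ p_l | nu l nu_gt0 _].
  by apply: t_val_pow2 => // k; rewrite expn_eq1_mod_pow2 // mulnA.
by apply: t_val_pow2 => // k; rewrite -expnM pow5_eq1_mod_pow2.
Qed.
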